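(* Let $I$ be a single-category instance with $n$ agents, $m$ goods and cardinality constraint $k$ with $m\le kn$. Let $\mathcal{A}^*=(A^*_1,\dots,A^*_n)$ be a utilitarian-optimal allocation, and let $R=\{i:|A^*_i|<k\}$ and $S=\{i:|A^*_i|>k\}$, and suppose $S\neq\emptyset$. Then there exist an agent $i^\dagger\in R$ and a cardinal allocation $\mathcal{A}$ such that $$\text{USW}(\mathcal{A})\ge 1+\sum_{i\in S}\frac{k}{|A^*_i|}\bigl(u_i(A^*_i)-u_{i^\dagger}(A^*_i)\bigr).$$
   Context: Each agent $i$ has an additive utility function $u_i:2^M\to\mathbb{R}_{\ge 0}$ with $u_i(\emptyset)=0$ and $u_i(M)=1$. An allocation is a partition $(A_1,\dots,A_n)$ of $M$; it is cardinal if $|A_i|\le k$ for all $i$. $\text{USW}(\mathcal{A})=\sum_i u_i(A_i)$; a utilitarian-optimal allocation is one maximizing $\text{USW}$ over all allocations. *)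

From mathcomp Require Import all_boot all_order all_algebra.
Set Implicit Arguments. Unset Strict Implicit. Unset Printing Implicit Defensive.
Import Order.TTheory GRing.Theory Num.Theory.
Local Open Scope ring_scope.

Definition util {R : numDomainType} {n m : nat}
  (v : 'I_n -> 'I_m -> R) (i : 'I_n) (A : {set 'I_m}) : R :=
  \sum_(g in A) v i g.

Definition normalized_additive {R : numDomainType} {n m : nat}
  (v : 'I_n -> 'I_m -> R) : Prop :=
  (forall i g, 0 <= v i g) /\ (forall i, util v i [set: 'I_m] = 1).

(* An allocation (partition of M into n bundles, possibly empty) is encoded
   by the map sending each good to its owner. *)
Definition alloc (n m : nat) := {ffun 'I_m -> 'I_n}.

Definition bundle {n m : nat} (A : alloc n m) (i : 'I_n) : {set 'I_m} :=
  [set g | A g == i].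

Definition cardinal {n m : nat} (k : nat) (A : alloc n m) : Prop :=
  forall i, (#|bundle A i| <= k)%N.

Definition USW {R : numDomainType} {n m : nat}
  (v : 'I_n -> 'I_m -> R) (A : alloc n m) : R :=
  \sum_(i < n) util v i (bundle A i).

Definition usw_optimal {R : numDomainType} {n m : nat}
  (v : 'I_n -> 'I_m -> R) (A : alloc n m) : Prop :=
  forall B : alloc n m, USW v B <= USW v A.

From mathcomp Require Import all_boot all_order all_algebra.
From mathcomp Require Import zify lra.
Import Order.TTheory GRing.Theory Num.Theory.
Local Open Scope ring_scope.
Set Implicit Arguments. Unset Strict Implicit. Unset Printing Implicit Defensive.

(* Let c_i = (k - |A*_i|)_+ be the free capacity of agent i and C = \sum_i c_i.
   Every agent j keeps min(k, |A*_j|) goods of A*_j, chosen to carry at least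
   their proportional share of the weight g |-> C u_{A*(g)}(g) - \sum_i c_i u_i(g).
   Since m <= k n, the goods given up fit into the free capacities, and they
   can be handed out one at a time, each to an agent chosen by averaging, so
   that C times their new value is at least their c-weighted value
   \sum_i c_i u_i.  Adding up, C USW(A) is at least the c-weighted average over
   i of the bound with i^dagger = i, in which optimality of A* makes the terms
   of the agents outside S nonnegative; so an i^dagger with c > 0 minimizing
   the bound works. *)

Section Averaging.
Variable R : realFieldType.

Lemma exists_weighted_mean_le (I : finType) (c : I -> nat) (X : I -> R) :
  (0 < \sum_i c i)%N ->
  exists i, (0 < c i)%N /\ \sum_i (c i)%:R * X i <= (\sum_i c i)%:R * X i.
Proof.
rewrite lt0n sum_nat_seq_neq0 => /hasP[i0 _ /= ci0]; rewrite -lt0n in ci0.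
case: (@arg_maxP _ _ _ i0 (fun i => 0 < c i)%N X ci0) => i ci Xmax.
exists i; split=> //; rewrite natr_sum mulr_suml; apply: ler_sum => j _.
have [->|cj] := posnP (c j); first by rewrite !mul0r.
by rewrite ler_wpM2l //; apply: Xmax.
Qed.

Lemma exists_weighted_mean_ge (I : finType) (c : I -> nat) (X : I -> R) :
  (0 < \sum_i c i)%N ->
  exists i, (0 < c i)%N /\ (\sum_i c i)%:R * X i <= \sum_i (c i)%:R * X i.
Proof.
rewrite lt0n sum_nat_seq_neq0 => /hasP[i0 _ /= ci0]; rewrite -lt0n in ci0.
case: (@arg_minP _ _ _ i0 (fun i => 0 < c i)%N X ci0) => i ci Xmin.
exists i; split=> //; rewrite natr_sum mulr_suml; apply: ler_sum => j _.
have [->|cj] := posnP (c j); first by rewrite !mul0r.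
by rewrite ler_wpM2l //; apply: Xmin.
Qed.

Lemma exists_mem_le_mean (T : finType) (f : T -> R) (A : {set T}) x0 :
  x0 \in A -> exists2 x, x \in A & #|A|%:R * f x <= \sum_(y in A) f y.
Proof.
move=> Ax0; case: (@arg_minP _ _ _ x0 (mem A) f Ax0) => x Ax fmin.
by exists x => //; rewrite mulr_natl -sumr_const; apply: ler_sum => y /fmin.
Qed.

Lemma exists_subset_mean_ge (T : finType) (f : T -> R) (k : nat) (A : {set T}) :
  (k <= #|A|)%N -> exists K : {set T}, [/\ K \subset A, #|K| = k &
    k%:R * \sum_(g in A) f g <= #|A|%:R * \sum_(g in K) f g].
Proof.
case: k => [|k] leA.
  by exists set0; rewrite sub0set cards0 big_set0 mul0r mulr0.
move Ht: #|A| => t; rewrite Ht in leA.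
elim: t A Ht leA => // t IH A Ht leA.
have [kt|ltA] := eqVneq k t; first by exists A; split; rewrite ?subxx ?Ht ?kt.
have [x0 Ax0] : exists x, x \in A by apply/card_gt0P; rewrite Ht.
have [x Ax fx_le] := exists_mem_le_mean f Ax0.
have cardA' : #|A :\ x| = t by move: Ht; rewrite (cardsD1 x) Ax => -[].
have lt_kt : (k < t)%N by rewrite ltn_neqAle ltA.
have [K [KA' cardK fK]] := IH (A :\ x) cardA' lt_kt.
exists K; split=> //; first exact: subset_trans KA' (subsetDl _ _).
rewrite (big_setD1 _ Ax) /= in fx_le *; rewrite Ht in fx_le.
have t_gt0 : 0 < t%:R :> R by rewrite ltr0n (leq_ltn_trans (leq0n k) lt_kt).
set a := \sum_(y in A :\ x) f y in fK fx_le *; set b := \sum_(y in K) f y in fK *.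
have fx_le_a : t%:R * f x <= a by move: fx_le; rewrite -addn1 natrD mulrDl mul1r addrC lerD2r.
rewrite -(ler_pM2l t_gt0).
apply: (@le_trans _ _ (t.+1%:R * (k.+1%:R * a))).
  have := ler_wpM2l (ler0n R k.+1) fx_le_a; rewrite -natr1; lra.
by rewrite [t%:R * _]mulrCA ler_wpM2l.
Qed.

End Averaging.

Section Assignment.
Variables (R : realFieldType) (T I : finType) (v : I -> T -> R).

Definition capacity_value (c : I -> nat) (g : T) : R := \sum_i (c i)%:R * v i g.

Lemma capacity_value_dec (c : I -> nat) j g : (0 < c j)%N ->
  capacity_value (fun i => c i - (i == j))%N g = capacity_value c g - v j g.
Proof.
move=> cj; rewrite /capacity_value (bigD1 j) //= [in RHS](bigD1 j) //= eqxx.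
rewrite natrB // mulrBl mul1r addrAC; congr (_ + _ - _).
by apply: eq_bigr => i /negbTE ->; rewrite subn0.
Qed.

Lemma sum_capacity_value_sub (c : I -> nat) g :
  \sum_j (c j)%:R * (capacity_value c g - v j g) =
  ((\sum_j c j)%:R - 1) * capacity_value c g.
Proof.
under [LHS]eq_bigr do rewrite mulrBr.
by rewrite sumrB -mulr_suml -natr_sum mulrBl mul1r.
Qed.

Lemma exists_owner_above_mean (c : I -> nat) (L : {set T}) g0 :
  g0 \in L -> (#|L| <= \sum_i c i)%N ->
  exists j, (0 < c j)%N /\ \sum_(g in L) capacity_value c g <=
    (\sum_i c i)%:R * (v j g0 + (\sum_(g in L :\ g0) (capacity_value c g - v j g))
                                 / ((\sum_i c i)%:R - 1)).
Proof.
move=> Lg0 capL; set C := (\sum_i c i)%N in capL *.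
have C_gt0 : (0 < C)%N by apply: leq_trans capL; apply/card_gt0P; exists g0.
(* Giving g0 to j and the rest of L inductively, with c j lowered by one,
   yields a value of at least [Y j]; the c-weighted mean of [Y] is the target. *)
pose Y j := v j g0 + (\sum_(g in L :\ g0) (capacity_value c g - v j g)) / (C%:R - 1).
suff sum_Y : \sum_(g in L) capacity_value c g = \sum_j (c j)%:R * Y j.
  by have [j [cj mean_le]] := exists_weighted_mean_le Y C_gt0; exists j; rewrite sum_Y.
rewrite (big_setD1 _ Lg0) /=.
under [RHS]eq_bigr do rewrite mulrDr mulrA.
rewrite big_split /= -mulr_suml; congr (_ + _).
have [C1|C1] := eqVneq (C%:R - 1 : R) 0.
  (* the junk value [x / 0 = 0] is harmless: with a single unit of capacity, [L :\ g0] is empty *)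
  have -> : L :\ g0 = set0.
    have C_eq1 : C = 1%N by apply/eqP; rewrite -(eqr_nat R) -subr_eq0 C1.
    by apply: cards0_eq; move: capL; rewrite (cardsD1 g0) Lg0 C_eq1 add1n ltnS leqn0 => /eqP.
  by rewrite big_set0 big1 ?mul0r // => i _; rewrite big_set0 mulr0.
suff -> : \sum_j (c j)%:R * \sum_(g in L :\ g0) (capacity_value c g - v j g) =
          (C%:R - 1) * \sum_(g in L :\ g0) capacity_value c g.
  by rewrite mulrC mulrA mulVf ?mul1r.
rewrite (eq_bigr (fun j => \sum_(g in L :\ g0) (c j)%:R * (capacity_value c g - v j g))).
  by rewrite exchange_big mulr_sumr; apply: eq_bigr => g _; apply: sum_capacity_value_sub.
by move=> i _; rewrite mulr_sumr.
Qed.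

Lemma exists_capacitated_assignment (i0 : I) (c : I -> nat) (L : {set T}) :
  (#|L| <= \sum_i c i)%N ->
  exists sigma : T -> I,
    (forall i, #|[set g in L | sigma g == i]| <= c i)%N /\
    \sum_(g in L) capacity_value c g <= (\sum_i c i)%:R * \sum_(g in L) v (sigma g) g.
Proof.
move Ht: #|L| => t; elim: t L c Ht => [|t IH] L c Ht capL.
  exists (fun=> i0); rewrite (cards0_eq Ht) !big_set0 mulr0; split=> // i.
  by rewrite (_ : [set g in set0 | _] = set0) ?cards0 //; apply/setP => g; rewrite !inE.
have [g0 Lg0] : exists g0, g0 \in L by apply/card_gt0P; rewrite Ht.
have capL' : (#|L| <= \sum_i c i)%N by rewrite Ht.
have [j [cj L_le]] := exists_owner_above_mean Lg0 capL'.
set C := (\sum_i c i)%N in capL L_le.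
pose c' i := (c i - (i == j))%N.
have sum_c' : (\sum_i c' i = C - 1)%N.
  rewrite /C (bigD1 j) //= [in RHS](bigD1 j) //= /c' eqxx.
  rewrite (eq_bigr c) => [|i /negbTE ->]; last by rewrite subn0.
  by move: cj; lia.
have cardL' : #|L :\ g0| = t by move: Ht; rewrite (cardsD1 g0) Lg0 => -[].
have [|sigma' [cap' val']] := IH (L :\ g0) c' cardL'; first by rewrite sum_c'; lia.
exists (fun g => if g == g0 then j else sigma' g); split.
  move=> i; rewrite (cardsD1 g0) inE Lg0 eqxx /=.
  rewrite (_ : _ :\ g0 = [set g in L :\ g0 | sigma' g == i]); last first.
    by apply/setP => g; rewrite !inE; case: eqP.
  have [-> | ij] := eqVneq i j.
    by move: (cap' j); rewrite /c' eqxx; lia.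
  by move: (cap' i); rewrite /c' (negbTE ij) subn0.
rewrite [X in _ <= _ * X](big_setD1 _ Lg0) /= eqxx.
apply: (le_trans L_le); rewrite ler_wpM2l // lerD2l.
rewrite (eq_bigr (fun g => v (sigma' g) g)) => [|g]; last by rewrite !inE => /andP[/negbTE ->].
move: val'; rewrite sum_c' (eq_bigr (fun g => capacity_value c g - v j g)) => [|g _]; last first.
  exact: capacity_value_dec.
have [t0 | t_gt0] := posnP t.
  by rewrite (cards0_eq (etrans cardL' t0)) !big_set0 mul0r.
have C_gt1 : (1 < C)%N by lia.
by rewrite natrB ?(ltnW C_gt1) // ler_pdivrMr ?subr_gt0 ?ltr1n // mulrC.
Qed.

End Assignment.

Section Allocations.
Variables (n m : nat).

Lemma big_bundles (V : Type) (idx : V) (op : Monoid.com_law idx) (A : alloc n m)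
    (F : 'I_m -> V) :
  \big[op/idx]_i \big[op/idx]_(g in bundle A i) F g = \big[op/idx]_g F g.
Proof.
rewrite [RHS](partition_big A xpredT) //=.
by apply: eq_bigr => i _; apply: eq_bigl => g; rewrite inE.
Qed.

Lemma card_bundles (A : alloc n m) (P : {set 'I_m}) :
  #|P| = (\sum_i #|P :&: bundle A i|)%N.
Proof.
rewrite -sum1_card (partition_big A xpredT) //=.
by apply: eq_bigr => i _; rewrite -sum1_card; apply: eq_bigl => g; rewrite !inE.
Qed.

Variables (R : realFieldType) (v : 'I_n -> 'I_m -> R).

Lemma USW_ownerE (A : alloc n m) : USW v A = \sum_g v (A g) g.
Proof.
rewrite -(big_bundles _ A); apply: eq_bigr => i _.
by apply: eq_bigr => g; rewrite inE => /eqP ->.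
Qed.

Lemma usw_optimal_owner_ge (A : alloc n m) :
  usw_optimal v A -> forall i g, v i g <= v (A g) g.
Proof.
move=> A_opt i g; have := A_opt [ffun x => if x == g then i else A x].
rewrite !USW_ownerE (bigD1 g) //= [leRHS](bigD1 g) //= ffunE eqxx.
by rewrite (eq_bigr (fun x => v (A x) x)) ?lerD2r // => x /negbTE xg; rewrite ffunE xg.
Qed.

End Allocations.

Section Reallocation.
Variables (R : realFieldType) (n m k : nat) (v : 'I_n -> 'I_m -> R) (Astar : alloc n m).

Local Notation load i := #|bundle Astar i|.

Definition slack (i : 'I_n) : nat := k - load i.

Definition total_slack : nat := \sum_i slack i.

Definition gain (g : 'I_m) : R :=
  total_slack%:R * v (Astar g) g - capacity_value v slack g.

(* The factor [min(k, |A*_j|) / |A*_j|] is [k / |A*_j|] for j in S and 1 (or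
   [0 / 0 = 0]) otherwise. *)
Definition envy_bound (i : 'I_n) : R :=
  1 + \sum_j ((minn k (load j))%:R / (load j)%:R) *
        (util v j (bundle Astar j) - util v i (bundle Astar j)).

Lemma sum_slack_envy j :
  \sum_i (slack i)%:R * (util v j (bundle Astar j) - util v i (bundle Astar j)) =
  \sum_(g in bundle Astar j) gain g.
Proof.
under eq_bigr do rewrite mulrBr.
rewrite sumrB /gain sumrB -mulr_suml -natr_sum; congr (_ - _).
  by rewrite /util mulr_sumr; apply: eq_bigr => g; rewrite inE => /eqP ->.
by rewrite /util /capacity_value exchange_big /=; apply: eq_bigr => i _; rewrite mulr_sumr.
Qed.

Lemma slack_weighted_envy_bound :
  (forall i, util v i [set: 'I_m] = 1) ->
  \sum_i (slack i)%:R * envy_bound i =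
  \sum_g capacity_value v slack g +
  \sum_j ((minn k (load j))%:R / (load j)%:R) * \sum_(g in bundle Astar j) gain g.
Proof.
move=> v1; have sum_v i : \sum_g v i g = 1.
  by rewrite -(v1 i) /util; apply: eq_bigl => g; rewrite inE.
rewrite /envy_bound; under eq_bigr do rewrite mulrDr mulr1.
rewrite big_split /=; congr (_ + _).
  rewrite /capacity_value exchange_big /=; apply: eq_bigr => i _.
  by rewrite -mulr_sumr sum_v mulr1.
under eq_bigr do rewrite mulr_sumr.
rewrite exchange_big /=; apply: eq_bigr => j _.
by rewrite -sum_slack_envy mulr_sumr; apply: eq_bigr => i _; rewrite mulrCA.
Qed.

Lemma envy_bound_ge : usw_optimal v Astar -> forall i,
  1 + \sum_(j < n | (k < load j)%N)
        (k%:R / (load j)%:R) * (util v j (bundle Astar j) - util v i (bundle Astar j))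
  <= envy_bound i.
Proof.
move=> Astar_opt i; rewrite lerD2l [leRHS](bigID (fun j => (k < load j)%N)) /= -[leLHS]addr0.
apply: lerD; first by apply: ler_sum => j /ltnW/minn_idPl ->.
apply: sumr_ge0 => j _; apply: mulr_ge0; first by rewrite divr_ge0.
rewrite subr_ge0; apply: ler_sum => g; rewrite inE => /eqP <-.
exact: usw_optimal_owner_ge.
Qed.

Section KeptGoods.
Variable K : 'I_n -> {set 'I_m}.
Hypothesis K_sub : forall j, K j \subset bundle Astar j.
Hypothesis K_card : forall j, #|K j| = minn k (load j).

Definition leftover : {set 'I_m} := [set g | g \notin K (Astar g)].

Lemma leftover_bundle j : leftover :&: bundle Astar j = bundle Astar j :\: K j.
Proof. by apply/setP => g; rewrite !inE; case: eqP => [->|]; rewrite ?andbF. Qed.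

Lemma card_leftover_le_total_slack : (m <= k * n)%N -> (#|leftover| <= total_slack)%N.
Proof.
move=> m_le.
have load_sum : (\sum_j load j = m)%N.
  by rewrite -[RHS]card_ord -cardsT (card_bundles Astar); apply: eq_bigr => j _; rewrite setTI.
have leftover_sum : (#|leftover| + \sum_j minn k (load j) = m)%N.
  rewrite (card_bundles Astar) -big_split -[RHS]load_sum; apply: eq_bigr => j _.
  rewrite leftover_bundle cardsD (setIidPr (K_sub j)) K_card.
  by rewrite /= subnK // geq_minr.
have slack_sum : (total_slack + \sum_j minn k (load j) = k * n)%N.
  rewrite -big_split.
  transitivity (\sum_(j < n) k)%N.
    by apply: eq_bigr => j _ /=; rewrite /slack; move: #|_| => s; lia.
  by rewrite sum_nat_const card_ord mulnC.
lia.
Qed.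

Lemma leftover_gt0 j : (k < load j)%N -> (0 < #|leftover|)%N.
Proof.
move=> k_lt; apply: leq_trans (subset_leq_card (subsetIl leftover (bundle Astar j))).
rewrite leftover_bundle cardsD (setIidPr (K_sub j)) K_card.
by move: #|_| k_lt => s; lia.
Qed.

Variable sigma : 'I_m -> 'I_n.
Hypothesis sigma_cap :
  forall i, (#|[set g in leftover | sigma g == i]| <= slack i)%N.

Definition reallocation : alloc n m :=
  [ffun g => if g \in leftover then sigma g else Astar g].

Lemma reallocation_cardinal : cardinal k reallocation.
Proof.
move=> i.
have sub : bundle reallocation i \subset [set g in leftover | sigma g == i] :|: K i.
  apply/subsetP => g; rewrite inE ffunE in_setU.
  case: ifPn => [Lg /eqP <- | ]; first by rewrite inE Lg eqxx.
  by rewrite inE negbK => Kg /eqP <-; rewrite Kg orbT.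
apply: leq_trans (subset_leq_card sub) _; apply: leq_trans (leq_card_setU _ _) _.
by move: (sigma_cap i); rewrite K_card /slack; move: #|_| #|bundle _ _| => a s; lia.
Qed.

Lemma sum_kept (F : 'I_m -> R) :
  \sum_j \sum_(g in K j) F g = \sum_(g | g \notin leftover) F g.
Proof.
rewrite [RHS](partition_big Astar xpredT) //=; apply: eq_bigr => j _.
apply: eq_bigl => g; rewrite inE negbK.
apply/idP/andP => [Kg | [Kg /eqP <-] //].
by have /subsetP/(_ g Kg) := K_sub j; rewrite inE => /eqP Ag; rewrite Ag Kg.
Qed.

Hypothesis K_gain : forall j,
  (minn k (load j))%:R * \sum_(g in bundle Astar j) gain g <=
  (load j)%:R * \sum_(g in K j) gain g.
Hypothesis sigma_value :
  \sum_(g in leftover) capacity_value v slack g <=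
  total_slack%:R * \sum_(g in leftover) v (sigma g) g.

Lemma slack_weighted_envy_bound_le :
  (forall i, util v i [set: 'I_m] = 1) ->
  \sum_i (slack i)%:R * envy_bound i <= total_slack%:R * USW v reallocation.
Proof.
move=> v1; rewrite slack_weighted_envy_bound // USW_ownerE.
have kept_gain : \sum_j ((minn k (load j))%:R / (load j)%:R) * \sum_(g in bundle Astar j) gain g
    <= \sum_(g | g \notin leftover) gain g.
  rewrite -sum_kept; apply: ler_sum => j _.
  have [load0 | load_gt0] := posnP (load j).
    have -> : K j = set0 by apply: cards0_eq; rewrite K_card load0 minn0.
    by rewrite load0 invr0 mulr0 mul0r big_set0.
  by rewrite mulrAC ler_pdivrMr ?ltr0n // [leRHS]mulrC K_gain.
apply: le_trans (lerD (lexx _) kept_gain) _.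
rewrite (bigID (mem leftover)) (bigID (mem leftover) _ (fun g => v _ g)) /= -addrA mulrDr.
apply: lerD.
  by under [X in _ <= _ * X]eq_bigr => g Lg do rewrite ffunE Lg.
rewrite -big_split mulr_sumr; apply: ler_sum => g Lg.
by rewrite /= /gain ffunE (negbTE Lg) addrC subrK.
Qed.

End KeptGoods.

Lemma exists_kept_goods : exists K : 'I_n -> {set 'I_m}, [/\
  forall j, K j \subset bundle Astar j,
  forall j, #|K j| = minn k (load j) &
  forall j, (minn k (load j))%:R * \sum_(g in bundle Astar j) gain g <=
            (load j)%:R * \sum_(g in K j) gain g].
Proof.
have /fin_all_exists[K KP] j := exists_subset_mean_ge gain (geq_minr k (load j)).
by exists K; split=> j; case: (KP j).
Qed.

End Reallocation.

Theorem lemma4 (R : realFieldType) (n m k : nat) (v : 'I_n -> 'I_m -> R)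
  (Astar : alloc n m) :
  normalized_additive v ->
  (m <= k * n)%N ->
  usw_optimal v Astar ->
  (exists i, (k < #|bundle Astar i|)%N) ->
  exists (idag : 'I_n) (A : alloc n m),
    (#|bundle Astar idag| < k)%N /\ cardinal k A /\
    1 + \sum_(i < n | (k < #|bundle Astar i|)%N)
          (k%:R / (#|bundle Astar i|)%:R) *
          (util v i (bundle Astar i) - util v idag (bundle Astar i))
      <= USW v A.
Proof.
move=> [_ v1] m_le Astar_opt [j0 k_lt].
have [K [K_sub K_card K_gain]] := exists_kept_goods k v Astar.
have slack_ge := card_leftover_le_total_slack K_sub K_card m_le.
have [sigma [sigma_cap sigma_value]] := exists_capacitated_assignment v j0 slack_ge.
have slack_gt0 := leq_trans (leftover_gt0 K_sub K_card k_lt) slack_ge.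
have [idag [idag_slack idag_min]] := exists_weighted_mean_ge (envy_bound k v Astar) slack_gt0.
exists idag, (reallocation Astar K sigma); split; [|split].
- by move: idag_slack; rewrite /slack subn_gt0.
- exact: reallocation_cardinal.
- have slack_gt0' : 0 < (total_slack k Astar)%:R :> R by rewrite ltr0n.
  rewrite -(ler_pM2l slack_gt0').
  apply: (le_trans (y := (total_slack k Astar)%:R * envy_bound k v Astar idag)).
    by rewrite ler_wpM2l ?envy_bound_ge.
  apply: le_trans idag_min _; exact: slack_weighted_envy_bound_le.
Qed.
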